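(* Let $(A,C,k)$ be an instance with $n$ voters, let $t>0$, and let $W$ be an affordable committee with $|N_c|\le t\frac{n}{k}$ for every $c\in C\setminus W$. Then the utilitarian ratio of $W$ is at least $\min\left(\frac12,\frac{|W|}{2tk}\right)$.
   Context: An instance $(A,C,k)$ consists of a finite nonempty candidate set $C$, voters $N=\{1,\dots,n\}$, approval sets $A_i\subseteq C$, and a committee size $1\le k\le |C|$. $N_c=\{i\in N: c\in A_i\}$. A committee is a set $W\subseteq C$ with $|W|\le k$. $\mathrm{sw}(W)=\sum_{i\in N}|A_i\cap W|$; the utilitarian ratio of $W$ is $\mathrm{sw}(W)/\max\{\mathrm{sw}(W'): |W'|=k\}$. A committee $W$ is affordable if there are functions $p_i:C\to\mathbb{R}_{\ge0}$ ($i\in N$) with: $p_i(c)=0$ whenever $c\notin A_i$; $\sum_{c}p_i(c)\le k/n$ for all $i$; $\sum_i p_i(c)=1$ for all $c\in W$; $\sum_i p_i(c)=0$ for all $c\notin W$. *)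

From mathcomp Require Import all_boot all_order all_algebra.
Set Implicit Arguments. Unset Strict Implicit. Unset Printing Implicit Defensive.
Import Order.TTheory GRing.Theory Num.Theory.
Local Open Scope ring_scope.

Definition supporters (Cd : finType) (n : nat) (A : 'I_n -> {set Cd}) (c : Cd)
  : {set 'I_n} := [set i | c \in A i].

Definition sw (Cd : finType) (n : nat) (A : 'I_n -> {set Cd}) (W : {set Cd}) : nat :=
  (\sum_(i < n) #|A i :&: W|)%N.

Definition max_sw (Cd : finType) (n : nat) (A : 'I_n -> {set Cd}) (k : nat) : nat :=
  (\max_(W' : {set Cd} | #|W'| == k) sw A W')%N.

Definition util_ratio (R : realFieldType) (Cd : finType) (n : nat)
  (A : 'I_n -> {set Cd}) (k : nat) (W : {set Cd}) : R :=
  (sw A W)%:R / (max_sw A k)%:R.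

(* W is affordable (|W| <= k is part of being a committee) *)
Definition affordable (R : realFieldType) (Cd : finType) (n : nat)
  (A : 'I_n -> {set Cd}) (k : nat) (W : {set Cd}) : Prop :=
  (#|W| <= k)%N /\
  exists p : 'I_n -> Cd -> R,
    [/\ (forall i c, 0 <= p i c),
        (forall i c, c \notin A i -> p i c = 0),
        (forall i, \sum_(c : Cd) p i c <= k%:R / n%:R),
        (forall c, c \in W -> \sum_(i < n) p i c = 1) &
        (forall c, c \notin W -> \sum_(i < n) p i c = 0)].

(** Affordability gives |W| n <= sw(W) k: every voter spends at most k/n, and
    only on members of W that she approves.  Conversely, any committee W' of
    size k gains over W only through candidates outside W, each approved by at
    most t n / k voters, so sw(W') <= sw(W) + t n.  If sw(W) >= t n the optimum
    is at most 2 sw(W); otherwise it is below 2 t n and the first bound gives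
    the ratio |W| / (2 t k). *)

From mathcomp Require Import all_boot all_order all_algebra.
From mathcomp Require Import lra zify.
Import Order.TTheory GRing.Theory Num.Theory.
Local Open Scope ring_scope.

Section Welfare.

Context {Cd : finType} {n : nat} (A : 'I_n -> {set Cd}).

Lemma swE (X : {set Cd}) : sw A X = (\sum_(c in X) #|supporters A c|)%N.
Proof.
rewrite /sw (eq_bigr (fun i => \sum_(c in X) (c \in A i) : nat)%N); last first.
  move=> i _; rewrite -sum1_card big_mkcond /= [RHS]big_mkcond /=.
  by apply: eq_bigr => c _; rewrite inE; case: (c \in A i); case: (c \in X).
rewrite exchange_big /=; apply: eq_bigr => c _.
rewrite -sum1_card [RHS]big_mkcond /=; apply: eq_bigr => i _; rewrite inE.
by case: (c \in A i).
Qed.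

Lemma subset_leq_sw {X Y : {set Cd}} : X \subset Y -> (sw A X <= sw A Y)%N.
Proof. by move=> sXY; apply: leq_sum => i _; rewrite subset_leq_card ?setIS. Qed.

Lemma exists_superset_card (X : {set Cd}) m :
  (#|X| <= m <= #|Cd|)%N -> exists2 Y : {set Cd}, X \subset Y & #|Y| = m.
Proof.
case/andP=> leXm lemCd.
have : (m - #|X| <= #|~: X|)%N by have := cardsC X; lia.
case/card_geqP => s [uniq_s size_s sub_s].
exists (X :|: [set x in s]); first exact: subsetUl.
rewrite cardsU; have -> : X :&: [set x in s] = set0.
  by apply/setP => x; rewrite !inE; apply/negbTE/andP => -[xX /sub_s]; rewrite inE xX.
by rewrite cards0 cardsE (card_uniqP uniq_s); lia.
Qed.

Lemma leq_sw_max_sw (W : {set Cd}) k :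
  (#|W| <= k <= #|Cd|)%N -> (sw A W <= max_sw A k)%N.
Proof.
case/exists_superset_card => W' sWW' cardW'.
apply: leq_trans (subset_leq_sw sWW') _.
by apply: leq_bigmax_cond; rewrite cardW'.
Qed.

Lemma max_sw_attained k :
  (k <= #|Cd|)%N -> exists2 W' : {set Cd}, #|W'| = k & max_sw A k = sw A W'.
Proof.
move=> le_k_Cd.
have /exists_superset_card[W0 _ cardW0] : (#|@set0 Cd| <= k <= #|Cd|)%N.
  by rewrite cards0.
have := @bigop.bigmax_eq_arg _ W0 (fun W' : {set Cd} => #|W'| == k) (sw A).
case: arg_maxnP => [|W' /eqP cardW' _ eq_max]; first exact/eqP.
by exists W'; rewrite // /max_sw eq_max ?cardW0.
Qed.

Context {R : realFieldType}.

Lemma sw_le_sw_add_outside (W W' : {set Cd}) (b : R) :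
  (forall c, c \notin W -> (#|supporters A c|)%:R <= b) ->
  (sw A W')%:R <= (sw A W)%:R + #|W' :\: W|%:R * b.
Proof.
move=> small.
rewrite !swE !natr_sum (bigID (mem W)) /=; apply: lerD.
  rewrite [leLHS]big_mkcond [leRHS]big_mkcond /=; apply: ler_sum => c _.
  by case: (c \in W'); case: (c \in W); rewrite /= ?lexx ?ler0n.
rewrite -sum1_card natr_sum mulr_suml.
rewrite [leRHS](eq_bigl (fun c => (c \in W') && (c \notin W))) => [|c]; last first.
  by rewrite !inE andbC.
by apply: ler_sum => c /andP[_ cW]; rewrite mul1r small.
Qed.

Lemma max_sw_le_sw_add {W : {set Cd}} {k : nat} {b : R} :
  (k <= #|Cd|)%N -> 0 <= b ->
  (forall c, c \notin W -> (#|supporters A c|)%:R <= b) ->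
  (max_sw A k)%:R <= (sw A W)%:R + k%:R * b.
Proof.
move=> le_k_Cd b_ge0 small; have [W' cardW' ->] := max_sw_attained k le_k_Cd.
apply: le_trans (sw_le_sw_add_outside W W' b small) _.
by rewrite lerD2l ler_wpM2r // ler_nat -cardW' subset_leq_card ?subsetDl.
Qed.

Lemma affordable_card_le_sw (k : nat) (W : {set Cd}) :
  (0 < n)%N -> affordable R A k W -> #|W|%:R * n%:R <= (sw A W)%:R * k%:R :> R.
Proof.
move=> n_gt0 [_ [p [p_ge0 p_approved p_budget p_W _]]].
have n_neq0 : n%:R != 0 :> R by rewrite pnatr_eq0 -lt0n.
suff : #|W|%:R <= (sw A W)%:R * (k%:R / n%:R) :> R.
  by move=> leWsw; have := ler_wpM2r (ler0n R n) leWsw; rewrite -mulrA mulfVK.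
have -> : #|W|%:R = \sum_(c in W) \sum_(i < n) p i c :> R.
  by rewrite -sum1_card natr_sum; apply: eq_bigr => c cW; rewrite p_W.
rewrite exchange_big /sw natr_sum mulr_suml; apply: ler_sum => i _.
have [AW0|AW_gt0] := posnP #|A i :&: W|.
  rewrite AW0 mul0r big1 // => c cW; apply: p_approved.
  apply: contraTN (introT eqP AW0) => cA.
  by rewrite -lt0n card_gt0; apply/set0Pn; exists c; rewrite inE cA.
apply: (@le_trans _ _ (\sum_c p i c)).
  by rewrite [leLHS]big_mkcond; apply: ler_sum => c _; case: ifP.
apply: le_trans (p_budget i) _.
by rewrite ler_peMl ?divr_ge0 ?ler0n // ler1n.
Qed.

End Welfare.

Lemma ratio_lower_bound (R : realFieldType) (n k t w s M : R) :
  0 < n -> 0 < k -> 0 < t -> 0 <= w -> 0 <= s -> s <= M ->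
  M <= s + t * n -> w * n <= s * k ->
  Num.min (1 / 2) (w / (2 * t * k)) <= s / M.
Proof.
move=> n_gt0 k_gt0 t_gt0 w_ge0 s_ge0 sM Mst wns.
rewrite ge_min; apply/orP.
have [M0|M_gt0] := eqVneq M 0.
  (* [s / 0 = 0], so the bound must come from [w = 0]. *)
  have s0 : s = 0 by lra.
  have w0 : w = 0 by nra.
  by right; rewrite w0 s0 !mul0r.
have {}M_gt0 : 0 < M by rewrite lt_def M_gt0; lra.
have [tns|stn] := leP (t * n) s.
  by left; rewrite ler_pdivlMr //; lra.
right; rewrite ler_pdivrMr ?mulr_gt0 // mulrAC ler_pdivlMr //.
have : w * M <= w * (2 * t * n) by rewrite ler_wpM2l //; lra.
nra.
Qed.

Theorem lemma2 (R : realFieldType) (Cd : finType) (n : nat)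
  (A : 'I_n -> {set Cd}) (k : nat) (t : R)
  (Hne : (0 < #|Cd|)%N) (Hn : (0 < n)%N) (Hk1 : (1 <= k)%N) (HkC : (k <= #|Cd|)%N)
  (Ht : 0 < t) (W : {set Cd})
  (HW : affordable R A k W)
  (Hsmall : forall c, c \notin W -> (#|supporters A c|)%:R <= t * (n%:R / k%:R)) :
  Num.min (1 / 2) ((#|W|)%:R / (2 * t * k%:R)) <= util_ratio R A k W.
Proof.
have k_neq0 : k%:R != 0 :> R by rewrite pnatr_eq0 -lt0n.
have W_le_k : (#|W| <= k)%N by case: HW.
apply: (@ratio_lower_bound _ n%:R); rewrite ?ltr0n ?ler0n //.
- by rewrite ler_nat leq_sw_max_sw ?W_le_k.
- apply: le_trans (max_sw_le_sw_add A HkC _ Hsmall) _.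
    by rewrite mulr_ge0 ?divr_ge0 ?ler0n ?ltW.
  by rewrite mulrCA [k%:R * _]mulrC mulfVK.
- exact: affordable_card_le_sw.
Qed.
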